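(* Let $\mathcal{D}:=\{Z\in L^1:Z\ge0 \text{ a.s.},\mathbb{E}[Z]=1\}$ and let $\mathcal{Q}\subset\mathcal{D}$ be convex with $1\in\mathcal{Q}$. Define $\tilde{\mathcal{Q}}_{\max}$ as the set of all $\tilde Z\in\mathcal{Q}$ with $\tilde Z>0$ a.s. for which there exists an $L^\infty$-dense subset $\mathcal{E}$ of $\mathcal{D}\cap L^\infty$ such that for every $Z\in\mathcal{E}$ there is $\lambda\in(0,1)$ with $\lambda Z+(1-\lambda)\tilde Z\in\mathcal{Q}$. Then $\tilde{\mathcal{Q}}_{\max}$ satisfies Conditions POS, MIX and INT. Moreover, if $\tilde{\mathcal{Q}}\subset\mathcal{Q}$ satisfies Conditions POS, MIX and INT, then $\tilde{\mathcal{Q}}\subset\tilde{\mathcal{Q}}_{\max}$.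
   Context: All random variables are on a probability space $(\Omega,\mathcal{F},\mathbb{P})$. For $\tilde{\mathcal{Q}}\subset\mathcal{Q}$: Condition POS: $\tilde Z>0$ a.s. for all $\tilde Z\in\tilde{\mathcal{Q}}$. Condition MIX: $\lambda Z+(1-\lambda)\tilde Z\in\tilde{\mathcal{Q}}$ for all $Z\in\mathcal{Q}$, $\tilde Z\in\tilde{\mathcal{Q}}$ and $\lambda\in(0,1)$. Condition INT: for every $\tilde Z\in\tilde{\mathcal{Q}}$ there is an $L^\infty$-dense subset $\mathcal{E}$ of $\mathcal{D}\cap L^\infty$ such that for every $Z\in\mathcal{E}$ there is $\lambda\in(0,1)$ with $\lambda Z+(1-\lambda)\tilde Z\in\mathcal{Q}$. *)

From HB Require Import structures.
From mathcomp Require Import all_boot all_order all_algebra.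
From mathcomp Require Import all_classical all_reals all_analysis.
Set Implicit Arguments. Unset Strict Implicit. Unset Printing Implicit Defensive.
Import Order.TTheory GRing.Theory Num.Theory.
Local Open Scope classical_set_scope.
Local Open Scope ring_scope.

Section Defs.
Context (d : measure_display) (T : measurableType d) (R : realType)
        (P : probability T R).

Definition L1 : set (T -> R) :=
  [set Z : T -> R | measurable_fun setT Z /\ P.-integrable setT (EFin \o Z)].

Definition Linf : set (T -> R) :=
  [set Z : T -> R | measurable_fun setT Z /\ exists M : R, {ae P, forall x, `|Z x| <= M}].

Definition Dset : set (T -> R) :=
  [set Z : T -> R | L1 Z /\ {ae P, forall x, 0 <= Z x} /\ (\int[P]_x (Z x)%:E = 1)%E].

Definition Linf_close (Z1 Z2 : T -> R) (eps : R) : Prop :=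
  {ae P, forall x, `|Z1 x - Z2 x| <= eps}.

Definition Linf_dense_in (E A : set (T -> R)) : Prop :=
  E `<=` A /\
  forall Z, A Z -> forall eps : R, 0 < eps -> exists2 Z', E Z' & Linf_close Z Z' eps.

Definition mix (lam : R) (Z Zt : T -> R) : T -> R :=
  fun x => lam * Z x + (1 - lam) * Zt x.

Definition convexQ (Q : set (T -> R)) : Prop :=
  forall Z1 Z2, Q Z1 -> Q Z2 -> forall lam : R, 0 <= lam <= 1 -> Q (mix lam Z1 Z2).

Definition condPOS (Qt : set (T -> R)) : Prop :=
  forall Zt, Qt Zt -> {ae P, forall x, 0 < Zt x}.

Definition condMIX (Q Qt : set (T -> R)) : Prop :=
  forall Z Zt lam, Q Z -> Qt Zt -> 0 < lam < 1 -> Qt (mix lam Z Zt).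

Definition int_property (Q : set (T -> R)) (Zt : T -> R) : Prop :=
  exists E : set (T -> R), Linf_dense_in E (Dset `&` Linf) /\
    forall Z, E Z -> exists lam : R, 0 < lam < 1 /\ Q (mix lam Z Zt).

Definition condINT (Q Qt : set (T -> R)) : Prop :=
  forall Zt, Qt Zt -> int_property Q Zt.

Definition Qmax (Q : set (T -> R)) : set (T -> R) :=
  [set Zt : T -> R | Q Zt /\ {ae P, forall x, 0 < Zt x} /\ int_property Q Zt].

End Defs.

(** Mixing [Zt] in [Qmax Q] with [Z] in [Q] keeps it in [Q] by convexity and
    keeps it a.s. positive because [Z >= 0] a.s.  For the density condition the
    set [E] witnessing it for [Zt] also works for [lam Z + (1 - lam) Zt]: if
    [mu Z' + (1 - mu) Zt] lies in [Q], then so does a mixture of [Z'] with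
    [lam Z + (1 - lam) Zt], since reassociating the barycentres exhibits it as a
    convex combination of [mu Z' + (1 - mu) Zt] and [Z]. *)
From mathcomp Require Import all_boot all_order all_algebra.
From mathcomp Require Import all_classical all_reals all_analysis.
From mathcomp Require Import ring lra.
Import Order.TTheory GRing.Theory Num.Theory.
Local Open Scope classical_set_scope.
Local Open Scope ring_scope.

Section Mixtures.
Context {d : measure_display} {T : measurableType d} {R : realType}.
Implicit Types (Z Zt : T -> R) (lam mu : R).

Lemma mix_mixA lam mu Z (Z' : T -> R) Zt : 1 - lam * mu != 0 ->
  mix ((1 - lam) * mu / (1 - lam * mu)) Z' (mix lam Z Zt) =
  mix ((1 - lam) / (1 - lam * mu)) (mix mu Z' Zt) Z.
Proof. by move=> lamu_neq0; apply/funext => x; rewrite /mix; field. Qed.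

Lemma mix_gt0 lam Z Zt x : 0 <= lam < 1 -> 0 <= Z x -> 0 < Zt x ->
  0 < mix lam Z Zt x.
Proof.
move=> /andP[lam_ge0 lam_lt1] Zx_ge0 Ztx_gt0; rewrite /mix.
by apply: ltr_wpDl; rewrite ?mulr_ge0 ?mulr_gt0 ?subr_gt0.
Qed.

Lemma convexQ_mix_mix {Q : set (T -> R)} {lam mu : R} {Z Z' Zt : T -> R} :
  convexQ Q -> 0 <= lam < 1 -> 0 < mu < 1 -> Q Z -> Q (mix mu Z' Zt) ->
  exists2 nu, 0 < nu < 1 & Q (mix nu Z' (mix lam Z Zt)).
Proof.
move=> cQ /andP[lam_ge0 lam_lt1] /andP[mu_gt0 mu_lt1] QZ QZ'.
have lamu_gt0 : 0 < 1 - lam * mu by nra.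
exists ((1 - lam) * mu / (1 - lam * mu)).
  apply/andP; split; first by rewrite divr_gt0 // mulr_gt0 // subr_gt0.
  by rewrite ltr_pdivrMr // mul1r; nra.
rewrite mix_mixA ?gt_eqF //; apply: cQ => //; apply/andP; split.
  by rewrite divr_ge0 ?ltW // subr_gt0.
by rewrite ler_pdivrMr // mul1r; nra.
Qed.

End Mixtures.

Section MaximalSet.
Context {d : measure_display} {T : measurableType d} {R : realType}.
Variables (P : probability T R) (Q : set (T -> R)).
Hypotheses (QD : Q `<=` Dset P) (cQ : convexQ Q).

Lemma int_property_mix {lam : R} {Z Zt : T -> R} : 0 <= lam < 1 -> Q Z ->
  int_property P Q Zt -> int_property P Q (mix lam Z Zt).
Proof.
move=> lam01 QZ [E [dE EQ]]; exists E; split => // Z' EZ'.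
have [mu [mu01 Qmu]] := EQ Z' EZ'.
by have [nu] := convexQ_mix_mix cQ lam01 mu01 QZ Qmu; exists nu.
Qed.

Lemma condMIX_Qmax : condMIX Q (Qmax P Q).
Proof.
move=> Z Zt lam QZ [QZt [Zt_gt0 intZt]] /andP[lam_gt0 lam_lt1].
have lam01 : 0 <= lam < 1 by rewrite ltW.
split; first by apply: cQ => //; rewrite ltW // ltW.
split; last exact: int_property_mix.
have [_ [Z_ge0 _]] := QD Z QZ.
by apply: filterS2 Z_ge0 Zt_gt0 => x; exact: mix_gt0.
Qed.

Lemma Qmax_sup (Qt : set (T -> R)) : Qt `<=` Q -> condPOS P Qt ->
  condINT P Q Qt -> Qt `<=` Qmax P Q.
Proof. by move=> QtQ Qt_pos Qt_int Zt QtZt; split; [|split]; auto. Qed.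

End MaximalSet.

Theorem proposition4p9 (d : measure_display) (T : measurableType d) (R : realType)
  (P : probability T R) (Q : set (T -> R)) :
  Q `<=` Dset P -> convexQ Q -> Q (fun _ => 1) ->
  (Qmax P Q `<=` Q /\ condPOS P (Qmax P Q) /\ condMIX Q (Qmax P Q)
     /\ condINT P Q (Qmax P Q)) /\
  (forall Qt : set (T -> R), Qt `<=` Q -> condPOS P Qt -> condMIX Q Qt ->
     condINT P Q Qt -> Qt `<=` Qmax P Q).
Proof.
move=> QD cQ _; split; last by move=> Qt QtQ Qt_pos _; exact: Qmax_sup.
split; first by move=> Zt [].
split; first by move=> Zt [_ []].
split; first exact: condMIX_Qmax.
by move=> Zt [_ []].
Qed.
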